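(* Let $(k,|\cdot|)$ be a complete valued field and $\mu$ a probability measure with countable support on $\mathrm{SL}(2,k)$ with $\int\log\|\gamma\|\,d\mu(\gamma)<\infty$. Suppose that every element of the support of $\mu$, acting as a Möbius transformation, leaves the pair $\{0,\infty\}$ invariant, and at least one element of the support permutes $0$ and $\infty$. Then $\chi(\mu)=0$.
   Context: $\|\cdot\|$ is the operator norm on $\mathrm{SL}(2,k)$ for the max norm on $k^2$; $\chi(\mu)=\lim_n\frac1n\int\log\|\gamma\|\,d\mu^n(\gamma)$ with $\mu^n$ the $n$-th convolution power. Such elements are matrices $\mathrm{diag}(\alpha,\alpha^{-1})$ or $\begin{pmatrix}0&-\alpha\\\alpha^{-1}&0\end{pmatrix}$. *)

From HB Require Import structures.
From mathcomp Require Import all_boot all_order all_algebra.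
From mathcomp Require Import all_classical all_reals all_analysis.
Set Implicit Arguments. Unset Strict Implicit. Unset Printing Implicit Defensive.
Import Order.TTheory GRing.Theory Num.Theory numFieldNormedType.Exports.
Local Open Scope classical_set_scope.
Local Open Scope ring_scope.

Record absval (k : fieldType) (R : realType) := AbsVal {
  av :> k -> R;
  av_ge0 : forall x, 0 <= av x;
  av_eq0 : forall x, av x = 0 <-> x = 0;
  avM : forall x y, av (x * y) = av x * av y;
  av_triangle : forall x y, av (x + y) <= av x + av y }.

Definition av_complete (k : fieldType) (R : realType) (A : absval k R) : Prop :=
  forall u : nat -> k,
    (forall e : R, 0 < e -> exists N : nat, forall m n : nat,
        (N <= m)%N -> (N <= n)%N -> A (u m - u n) < e) ->
    exists l : k, (fun n => A (u n - l)) @ \oo --> (0 : R).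

Definition maxnorm (k : fieldType) (R : realType) (A : absval k R)
  (v : 'cV[k]_2) : R := Order.max (A (v ord0 ord0)) (A (v ord_max ord0)).

Definition opnorm (k : fieldType) (R : realType) (A : absval k R)
  (g : 'M[k]_2) : R :=
  sup [set maxnorm A (g *m v) / maxnorm A v | v in [set v : 'cV[k]_2 | v != 0]].

(* A probability measure with countable support on 2x2 matrices, given by
   its (point-mass) weight function p; its support is [set g | p g != 0]. *)
Definition discrete_prob (k : fieldType) (R : realType) (p : 'M[k]_2 -> R) : Prop :=
  [/\ forall g, 0 <= p g,
      countable [set g | p g != 0] &
      (\esum_(g in [set: 'M[k]_2]) (p g)%:E = 1)%E].

Definition conv (k : fieldType) (R : realType) (p q : 'M[k]_2 -> R)
  (g : 'M[k]_2) : R :=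
  fine (\esum_(x in [set x : 'M[k]_2 * 'M[k]_2 | x.1 *m x.2 = g])
          (p x.1 * q x.2)%:E).

Fixpoint convpow (k : fieldType) (R : realType) (p : 'M[k]_2 -> R) (n : nat)
  : 'M[k]_2 -> R :=
  match n with
  | 0 => fun g => if g == 1%:M then 1 else 0
  | n'.+1 => conv (convpow p n') p
  end.

Definition int_lognorm (k : fieldType) (R : realType) (A : absval k R)
  (q : 'M[k]_2 -> R) : \bar R :=
  \esum_(g in [set: 'M[k]_2]) (q g * ln (opnorm A g))%:E.

(* projective points: [z0 : z1]; 0 = [0:1], infinity = [1:0] *)
Definition pt0 (k : fieldType) : 'cV[k]_2 := \col_i (if i == ord0 then 0 else 1).
Definition ptinf (k : fieldType) : 'cV[k]_2 := \col_i (if i == ord0 then 1 else 0).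
Definition proj_eq (k : fieldType) (v w : 'cV[k]_2) : Prop :=
  exists c : k, c != 0 /\ v = c *: w.

(* Moebius action of g on P^1(k) is [v] |-> [g v] *)
Definition in0inf (k : fieldType) (v : 'cV[k]_2) : Prop :=
  proj_eq v (pt0 k) \/ proj_eq v (ptinf k).

Definition leaves_0inf (k : fieldType) (g : 'M[k]_2) : Prop :=
  in0inf (g *m pt0 k) /\ in0inf (g *m ptinf k).

Definition swaps_0inf (k : fieldType) (g : 'M[k]_2) : Prop :=
  proj_eq (g *m pt0 k) (ptinf k) /\ proj_eq (g *m ptinf k) (pt0 k).

(* The support of mu consists of monomial matrices g, diagonal diag(a, a^-1) or
   antidiagonal with entries -a and a^-1.  For them ln ||g|| = |ln |a||, and
   l(g) := ln |a| is a twisted cocycle: l(gh) = l(g) + s(g) l(h), where s(g) = -1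
   if g swaps 0 and oo and s(g) = 1 otherwise.  As mu charges a swap, E[1 - s] > 0,
   and with c = E[l] / E[1 - s] the corrected function M := l + c s satisfies
   M(gh) = M(g) + s(g) x(h), where x := l - c (1 - s) is integrable of mean zero.
   Along the random walk M is thus a martingale with integrable increments, so
   E|M| is sublinear: for the Huber function h_K (quadratic on [-K, K], linear
   outside) each step raises E h_K(M) by at most d(K) = E min(x^2/2, 2K|x|), which
   is o(K), while |t| <= h_K(t)/K + K/2.  Hence E ln ||g_1 ... g_n|| <= E|M| + |c|
   = o(n). *)

From Pilot Require Import Defs.
From HB Require Import structures.
From mathcomp Require Import all_boot all_order all_algebra.
From mathcomp Require Import all_classical all_reals all_analysis.
From mathcomp Require Import ring lra.
Import Order.TTheory GRing.Theory Num.Theory numFieldNormedType.Exports.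
Set Implicit Arguments. Unset Strict Implicit. Unset Printing Implicit Defensive.
Local Open Scope classical_set_scope.
Local Open Scope ring_scope.

Section esum_scale.
Variables (R : realType) (T : choiceType).
Local Open Scope ereal_scope.

Lemma esumZl (c : R) (D : set T) (f : T -> \bar R) : (0 <= c)%R ->
  (forall x, 0 <= f x) -> \esum_(x in D) (c%:E * f x) = c%:E * \esum_(x in D) f x.
Proof.
move=> c0 f0; rewrite /esum -ereal_supZl //; last first.
  by apply/set0P; exists 0; exists set0; [exact: fsets_set0|rewrite fsbig_set0].
rewrite image_comp.
by congr ereal_sup; apply: eq_imagel => X _ /=; rewrite ge0_mule_fsumr.
Qed.

Lemma esumZr (c : R) (D : set T) (f : T -> \bar R) : (0 <= c)%R ->
  (forall x, 0 <= f x) -> \esum_(x in D) (f x * c%:E) = (\esum_(x in D) f x) * c%:E.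
Proof.
by move=> c0 f0; rewrite muleC -esumZl //; apply: eq_esum => x _; rewrite muleC.
Qed.

Lemma esumT_point (t : T) (f : T -> \bar R) : (forall x, x != t -> f x = 0) ->
  0 <= f t -> \esum_(x in setT) f x = f t.
Proof.
move=> f0 ft; rewrite (esumID [set t]); last first.
  by move=> x _; case: (eqVneq x t) => [->|/f0 ->].
rewrite setTI esum_set1 // esum1 ?adde0 // => x [_ /= /eqP]; exact: f0.
Qed.

End esum_scale.

Section esum_fubini.
Variables (R : realType) (T1 T2 : choiceType).
Local Open Scope ereal_scope.

Lemma esum_pair (F : T1 * T2 -> \bar R) : (forall x, 0 <= F x) ->
  \esum_(x in setT) F x = \esum_(a in setT) \esum_(b in setT) F (a, b).
Proof.
move=> F0; rewrite esum_esum //.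
have -> : [set: T1] `*`` (fun=> [set: T2]) = setT by apply/seteqP; split.
by apply: eq_esum => -[a b].
Qed.

Lemma esum_fibres (phi : T1 -> T2) (F : T1 -> \bar R) : (forall x, 0 <= F x) ->
  \esum_(y in setT) \esum_(x in phi @^-1` [set y]) F x = \esum_(x in setT) F x.
Proof.
move=> F0; rewrite esum_esum // (reindex_esum setT _ (fun x => (phi x, x))) //.
split=> [x _ //|x y _ _ [] //|[y x] [_ /= <-]]; by exists x.
Qed.

End esum_fubini.

Definition pospart {R : realDomainType} (x : R) := (x + `|x|) / 2.
Definition negpart {R : realDomainType} (x : R) := (`|x| - x) / 2.

Section pospart_negpart.
Variable R : realFieldType.
Implicit Type x : R.

Let normr_bounds x : x <= `|x| /\ - x <= `|x|.
Proof. by split; [exact: ler_norm|rewrite -normrN; exact: ler_norm]. Qed.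

Lemma pospart_ge0 x : 0 <= pospart x.
Proof. rewrite /pospart; have := normr_bounds x; lra. Qed.
Lemma negpart_ge0 x : 0 <= negpart x.
Proof. rewrite /negpart; have := normr_bounds x; lra. Qed.
Lemma pospart_le_norm x : pospart x <= `|x|.
Proof. rewrite /pospart; have := normr_bounds x; lra. Qed.
Lemma negpart_le_norm x : negpart x <= `|x|.
Proof. rewrite /negpart; have := normr_bounds x; lra. Qed.
Lemma pospart_negpart x : pospart x - negpart x = x.
Proof. rewrite /pospart /negpart; lra. Qed.
Lemma pospartN x : pospart (- x) = negpart x.
Proof. by rewrite /pospart /negpart normrN addrC. Qed.
Lemma negpartN x : negpart (- x) = pospart x.
Proof. by rewrite /pospart /negpart normrN opprK addrC. Qed.
Lemma negpart_eq0 x : 0 <= x -> negpart x = 0.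
Proof. by move=> x0; rewrite /negpart ger0_norm // subrr mul0r. Qed.

End pospart_negpart.

Section discrete_mean.
Variables (R : realType) (T : choiceType) (w : T -> R).
Implicit Types f g u v : T -> R.

Definition wsum f : \bar R := \esum_(x in setT) (w x * f x)%:E.
Definition wintegrable f := (wsum (fun x => `|f x|%R) < +oo)%E.
(* Junk unless [wintegrable f]: [fine] sends an infinite sum to 0. *)
Definition wmean f := fine (wsum (pospart \o f)) - fine (wsum (negpart \o f)).

Hypotheses (w_ge0 : forall x, 0 <= w x) (w_mass1 : (\esum_(x in setT) (w x)%:E = 1)%E).

Lemma wsum_ge0 f : (forall x, 0 <= f x) -> (0 <= wsum f)%E.
Proof. by move=> f0; apply: esum_ge0 => x _; rewrite lee_fin mulr_ge0. Qed.

Lemma le_wsum f g : (forall x, w x != 0 -> f x <= g x) -> (wsum f <= wsum g)%E.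
Proof.
move=> fg; apply: le_esum => x _; rewrite lee_fin.
by case: (eqVneq (w x) 0) => [->|/fg]; rewrite ?mul0r // => /ler_wpM2l; apply.
Qed.

Lemma wsumD f g : (forall x, 0 <= f x) -> (forall x, 0 <= g x) ->
  wsum (fun x => f x + g x) = (wsum f + wsum g)%E.
Proof.
move=> f0 g0; rewrite /wsum -esumD => [|x _|x _]; last 2 first.
- by rewrite lee_fin mulr_ge0.
- by rewrite lee_fin mulr_ge0.
by apply: eq_esum => x _; rewrite mulrDr EFinD.
Qed.

Lemma wsumZ c f : 0 <= c -> (forall x, 0 <= f x) ->
  wsum (fun x => c * f x) = (c%:E * wsum f)%E.
Proof.
move=> c0 f0; rewrite /wsum -esumZl // => [|x]; last by rewrite lee_fin mulr_ge0.
by apply: eq_esum => x _; rewrite mulrCA EFinM.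
Qed.

Lemma wsum_cst c : 0 <= c -> wsum (fun=> c) = c%:E.
Proof.
move=> c0; rewrite /wsum.
under eq_esum do rewrite EFinM.
by rewrite esumZr // ?w_mass1 ?mul1e // => x; rewrite lee_fin.
Qed.

Lemma nng_wintegrableE f : (forall x, 0 <= f x) -> wintegrable f = (wsum f < +oo)%E.
Proof.
by move=> f0; rewrite /wintegrable /wsum; congr (_ < _)%E; apply: eq_esum => x _;
  rewrite ger0_norm.
Qed.

Lemma nng_wsum_fin f : (forall x, 0 <= f x) -> wintegrable f ->
  wsum f = (fine (wsum f))%:E.
Proof.
move=> f0; rewrite nng_wintegrableE // => lt; rewrite fineK // ge0_fin_numE //.
exact: wsum_ge0.
Qed.

Lemma wintegrable_le f g : (forall x, w x != 0 -> `|f x| <= `|g x|) ->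
  wintegrable g -> wintegrable f.
Proof. by move=> fg; apply: le_lt_trans; apply: le_wsum. Qed.

Lemma wintegrableD f g : wintegrable f -> wintegrable g ->
  wintegrable (fun x => f x + g x).
Proof.
move=> fi gi; apply: (@wintegrable_le _ (fun x => `|f x| + `|g x|)).
  by move=> x _; rewrite [X in _ <= X]ger0_norm ?addr_ge0 // ler_normD.
rewrite nng_wintegrableE => [|x]; last by rewrite addr_ge0.
by rewrite wsumD //; apply: lte_add_pinfty.
Qed.

Lemma wintegrableZ c f : wintegrable f -> wintegrable (fun x => c * f x).
Proof.
rewrite /wintegrable => fi; under eq_fun do rewrite normrM.
by rewrite wsumZ // (lte_mul_pinfty _ _ fi) // ?lee_fin ?ltry.
Qed.

Lemma wintegrable_cst c : wintegrable (fun=> c).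
Proof. by rewrite /wintegrable wsum_cst // ltry. Qed.

Lemma wsum_indic f (X : set T) :
  wsum (fun x => f x * \1_X x) = \esum_(x in X) (w x * f x)%:E.
Proof.
rewrite [RHS]esum_mkcond; apply: eq_esum => x _; rewrite indicE.
by case: (x \in X); rewrite ?mulr1 ?mulr0.
Qed.

Lemma wintegrable_indic f (X : set T) : finite_set X ->
  wintegrable (fun x => f x * \1_X x).
Proof.
move=> finX; rewrite /wintegrable.
under eq_fun do rewrite normrM [`|\1_X _|]ger0_norm ?indic_ge0 //.
rewrite wsum_indic esum_fset // ?fsumEFin // ?ltry // => x _.
by rewrite lee_fin mulr_ge0.
Qed.

Lemma wintegrableN f : wintegrable f -> wintegrable (fun x => - f x).
Proof. by apply: wintegrable_le => x _; rewrite normrN. Qed.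

Lemma wintegrable_normr f : wintegrable f -> wintegrable (fun x => `|f x|).
Proof. by apply: wintegrable_le => x _; rewrite normr_id. Qed.

Lemma wintegrable_pospart f : wintegrable f -> wintegrable (pospart \o f).
Proof.
by apply: wintegrable_le => x _ /=; rewrite ger0_norm ?pospart_le_norm ?pospart_ge0.
Qed.

Lemma wintegrable_negpart f : wintegrable f -> wintegrable (negpart \o f).
Proof.
by apply: wintegrable_le => x _ /=; rewrite ger0_norm ?negpart_le_norm ?negpart_ge0.
Qed.

Lemma fine_wsumD f g : (forall x, 0 <= f x) -> (forall x, 0 <= g x) ->
  wintegrable f -> wintegrable g ->
  fine (wsum (fun x => f x + g x)) = fine (wsum f) + fine (wsum g).
Proof.
move=> f0 g0 fi gi.
by rewrite wsumD // (nng_wsum_fin f0 fi) (nng_wsum_fin g0 gi).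
Qed.

Lemma wmean_split f u v : (forall x, 0 <= u x) -> (forall x, 0 <= v x) ->
  wintegrable u -> wintegrable v -> (forall x, f x = u x - v x) ->
  wmean f = fine (wsum u) - fine (wsum v).
Proof.
move=> u0 v0 ui vi fE.
have fi : wintegrable f.
  apply: (wintegrable_le (g := fun x => u x + v x)) (wintegrableD ui vi) => x _.
  rewrite fE [X in _ <= X]ger0_norm ?addr_ge0 //.
  by apply: le_trans (ler_normB _ _) _; rewrite !ger0_norm.
have pos0 x : 0 <= (pospart \o f) x := pospart_ge0 _.
have neg0 x : 0 <= (negpart \o f) x := negpart_ge0 _.
have E : wsum (fun x => pospart (f x) + v x) = wsum (fun x => negpart (f x) + u x).
  by congr wsum; apply: funext => x; have := pospart_negpart (f x); rewrite fE; lra.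
move/(congr1 fine): E.
rewrite (fine_wsumD pos0 v0 (wintegrable_pospart fi) vi).
rewrite (fine_wsumD neg0 u0 (wintegrable_negpart fi) ui).
by rewrite /wmean; lra.
Qed.

Lemma wmean_nng f : (forall x, 0 <= f x) -> wintegrable f -> (wmean f)%:E = wsum f.
Proof.
move=> f0 fi; rewrite (wmean_split f0 (fun=> lexx 0) fi (wintegrable_cst 0)) => [|x].
  by rewrite wsum_cst // subr0 -nng_wsum_fin.
by rewrite subr0.
Qed.

Lemma wmeanN f : wmean (fun x => - f x) = - wmean f.
Proof.
rewrite /wmean opprB; congr (fine (wsum _) - fine (wsum _)); apply: funext => x /=.
  exact: pospartN.
exact: negpartN.
Qed.

Lemma wmeanD f g : wintegrable f -> wintegrable g ->
  wmean (fun x => f x + g x) = wmean f + wmean g.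
Proof.
move=> fi gi.
have [pf pg] := (wintegrable_pospart fi, wintegrable_pospart gi).
have [nf ng] := (wintegrable_negpart fi, wintegrable_negpart gi).
have pos0 (h : T -> R) x : 0 <= (pospart \o h) x := pospart_ge0 _.
have neg0 (h : T -> R) x : 0 <= (negpart \o h) x := negpart_ge0 _.
rewrite (wmean_split (u := fun x => pospart (f x) + pospart (g x))
                    (v := fun x => negpart (f x) + negpart (g x))).
- rewrite (fine_wsumD (pos0 f) (pos0 g) pf pg) (fine_wsumD (neg0 f) (neg0 g) nf ng).
  by rewrite /wmean; lra.
- by move=> x; rewrite addr_ge0 ?pospart_ge0.
- by move=> x; rewrite addr_ge0 ?negpart_ge0.
- exact: wintegrableD.
- exact: wintegrableD.
- by move=> x; have := pospart_negpart (f x); have := pospart_negpart (g x); lra.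
Qed.

Lemma wmeanZ c f : wintegrable f -> wmean (fun x => c * f x) = c * wmean f.
Proof.
move=> fi; have nng (d : R) : 0 <= d -> wmean (fun x => d * f x) = d * wmean f.
  move=> d0; rewrite (wmean_split (u := fun x => d * pospart (f x))
                                 (v := fun x => d * negpart (f x))).
  - rewrite (wsumZ d0 (fun x => pospart_ge0 (f x))).
    rewrite (wsumZ d0 (fun x => negpart_ge0 (f x))).
    rewrite (nng_wsum_fin (fun x => pospart_ge0 (f x)) (wintegrable_pospart fi)).
    rewrite (nng_wsum_fin (fun x => negpart_ge0 (f x)) (wintegrable_negpart fi)).
    by rewrite -!EFinM /= /wmean mulrBr.
  - by move=> x; rewrite mulr_ge0 ?pospart_ge0.
  - by move=> x; rewrite mulr_ge0 ?negpart_ge0.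
  - exact/wintegrableZ/wintegrable_pospart.
  - exact/wintegrableZ/wintegrable_negpart.
  - by move=> x; rewrite -mulrBr pospart_negpart.
have [/nng //|/ltW] := lerP 0 c; rewrite -oppr_ge0 => /nng e.
apply: oppr_inj; rewrite -wmeanN -mulNr -e.
by congr wmean; apply: funext => x; rewrite mulNr.
Qed.

Lemma wmean_cst c : wmean (fun=> c) = c.
Proof.
rewrite (wmean_split (fun=> pospart_ge0 c) (fun=> negpart_ge0 c)
                    (wintegrable_cst _) (wintegrable_cst _)) => [|x].
  by rewrite !wsum_cst ?pospart_ge0 ?negpart_ge0 //= pospart_negpart.
by rewrite pospart_negpart.
Qed.

Lemma wmean_ge0 f : (forall x, w x != 0 -> 0 <= f x) -> 0 <= wmean f.
Proof.
move=> f0; rewrite /wmean; have -> : wsum (negpart \o f) = 0%E.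
  apply: esum1 => x _; case: (eqVneq (w x) 0) => [->|/f0 fx]; first by rewrite mul0r.
  by rewrite /= negpart_eq0 // mulr0.
by rewrite subr0; apply/fine_ge0/wsum_ge0 => x; exact: pospart_ge0.
Qed.

Lemma ler_wmean f g : wintegrable f -> wintegrable g ->
  (forall x, w x != 0 -> f x <= g x) -> wmean f <= wmean g.
Proof.
move=> fi gi fg; rewrite -subr_ge0 -wmeanN -wmeanD ?wintegrableN //.
by apply: wmean_ge0 => x /fg; rewrite subr_ge0.
Qed.

Lemma wmean_ge_point f t : (forall x, 0 <= f x) -> wintegrable f ->
  w t * f t <= wmean f.
Proof.
move=> f0 fi; rewrite -lee_fin wmean_nng //; apply: esum_ge.
by exists [set t]; [split=> //; exact: finite_set1|rewrite fsbig_set1].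
Qed.

Lemma wintegrable_tail f e : (forall x, 0 <= f x) -> wintegrable f -> 0 < e ->
  exists2 X, finite_set X & wmean (fun x => f x * (1 - \1_X x)) <= e.
Proof.
move=> f0 fi e0.
have : ((wmean f - e)%:E < wsum f)%E by rewrite -wmean_nng // lte_fin; lra.
move=> /ereal_sup_gt [_ [X [finX _] <-]] lt; exists X => //.
have fXi := wintegrable_indic f finX.
have -> : (fun x => f x * (1 - \1_X x)) = (fun x => f x + - (f x * \1_X x)).
  by apply: funext => x; rewrite mulrBr mulr1.
rewrite wmeanD ?wmeanN ?wintegrableN //.
have : (wmean (fun x => f x * \1_X x))%:E = \sum_(x \in X) (w x * f x)%:E.
  rewrite wmean_nng // => [|x]; last by rewrite mulr_ge0 ?indic_ge0.
  by rewrite wsum_indic esum_fset // => x _; rewrite lee_fin mulr_ge0.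
by move: lt => /[swap] <-; rewrite lte_fin; lra.
Qed.

End discrete_mean.

Section absval_theory.
Variables (k : fieldType) (R : realType) (A : absval k R).

Lemma absval0 : A 0 = 0. Proof. exact/(av_eq0 A). Qed.

Lemma absval_gt0 x : x != 0 -> 0 < A x.
Proof.
by move=> x0; rewrite lt_def av_ge0 andbT; apply: contraNneq x0 => /(av_eq0 A) ->.
Qed.

Lemma absval1 : A 1 = 1.
Proof.
have A1_gt0 : 0 < A 1 by rewrite absval_gt0 ?oner_eq0.
by apply: (mulfI (lt0r_neq0 A1_gt0)); rewrite -avM !mulr1.
Qed.

Lemma absvalN1 : A (-1) = 1.
Proof.
have : A (-1) ^+ 2 = 1 ^+ 2 by rewrite expr2 -avM mulrNN mulr1 absval1 expr1n.
by move/eqP; rewrite eqrXn2 ?av_ge0 // => /eqP.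
Qed.

End absval_theory.

Local Notation i0 := (ord0 : 'I_2).
Local Notation i1 := (ord_max : 'I_2).

Lemma mulmx2E (k : pzRingType) m n (g : 'M[k]_(m, 2)) (h : 'M[k]_(2, n)) i j :
  (g *m h) i j = g i i0 * h i0 j + g i i1 * h i1 j.
Proof.
rewrite mxE !big_ord_recl big_ord0 addr0.
by have -> : lift ord0 ord0 = i1 by apply/val_inj.
Qed.

Lemma det_mx2 (k : comPzRingType) (g : 'M[k]_2) :
  \det g = g i0 i0 * g i1 i1 - g i0 i1 * g i1 i0.
Proof.
rewrite (expand_det_row g ord0) !big_ord_recl big_ord0 addr0 /cofactor !det_mx11.
have -> : lift ord0 ord0 = i1 by apply/val_inj.
rewrite !mxE /=.
have -> : lift ord0 ord0 = i1 by apply/val_inj.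
have -> : lift i1 ord0 = i0 by apply/val_inj.
by rewrite expr0 expr1 mul1r mulN1r mulrN.
Qed.

Section monomial_SL2.
Variable k : fieldType.
Implicit Types a b g : 'M[k]_2.

Definition monomial_SL2 g : Prop :=
  (g i0 i1 = 0 /\ g i1 i0 = 0 /\ g i0 i0 * g i1 i1 = 1) \/
  (g i0 i0 = 0 /\ g i1 i1 = 0 /\ g i0 i1 * g i1 i0 = -1).

Lemma monomial_SL2E g : monomial_SL2 g <->
  \det g = 1 /\ ((g i0 i1 = 0 /\ g i1 i0 = 0) \/ (g i0 i0 = 0 /\ g i1 i1 = 0)).
Proof.
rewrite /monomial_SL2 det_mx2; split.
  case=> -[-> [-> d]]; split; rewrite ?mul0r ?mulr0 ?subr0 ?sub0r ?d ?opprK //;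
  by [left|right].
case=> + [] [e1 e2]; rewrite e1 e2 ?mul0r ?mulr0 ?subr0 ?sub0r => d; [by left|right].
by rewrite -d opprK.
Qed.

Lemma monomial_SL2_1 : monomial_SL2 1%:M.
Proof. by apply/monomial_SL2E; rewrite det1 !mxE; split; [|left]. Qed.

Lemma monomial_SL2_mul a b :
  monomial_SL2 a -> monomial_SL2 b -> monomial_SL2 (a *m b).
Proof.
rewrite !monomial_SL2E det_mulmx => -[-> sa] [-> sb]; split; first by rewrite mulr1.
rewrite !mulmx2E; case: sa => -[-> ->]; case: sb => -[-> ->];
  rewrite ?mul0r ?mulr0 ?addr0 ?add0r; by [left|right].
Qed.

Lemma mul_pt0 g i : (g *m pt0 k) i ord0 = g i i1.
Proof. by rewrite mulmx2E !mxE /= mulr0 add0r mulr1. Qed.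

Lemma mul_ptinf g i : (g *m ptinf k) i ord0 = g i i0.
Proof. by rewrite mulmx2E !mxE /= mulr0 addr0 mulr1. Qed.

Lemma monomial_SL2_leaves_0inf g :
  \det g = 1 -> leaves_0inf g -> monomial_SL2 g.
Proof.
move=> detg [h0 hinf]; apply/monomial_SL2E; split => //.
have E1 : g i0 i1 = 0 \/ g i1 i1 = 0.
  by case: h0 => -[c [_ e]]; [left|right]; rewrite -mul_pt0 e !mxE /= mulr0.
have E2 : g i0 i0 = 0 \/ g i1 i0 = 0.
  by case: hinf => -[c [_ e]]; [left|right]; rewrite -mul_ptinf e !mxE /= mulr0.
move: detg; rewrite det_mx2.
case: E1 => ->; case: E2 => ->; rewrite ?mul0r ?mulr0 ?subr0 ?sub0r ?oppr0;
  by [move/eqP; rewrite eq_sym oner_eq0|left|right].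
Qed.

Lemma swaps_0inf_entry g : swaps_0inf g -> g i0 i1 != 0.
Proof. by case=> -[c [c0 e]] _; rewrite -mul_pt0 e !mxE /= mulr1. Qed.

End monomial_SL2.

Section monomial_norm.
Variables (k : fieldType) (R : realType) (A : absval k R).
Implicit Types a b g : 'M[k]_2.

(* For monomial [g], [row_sum g i0] is the |a| of the header and [msign g] is s(g). *)
Definition row_sum g i := A (g i i0) + A (g i i1).
Definition log_alpha g := ln (row_sum g i0).
Definition msign g : R := if g i0 i1 == 0 then 1 else -1.

Lemma msign_cases g : msign g = 1 \/ msign g = -1.
Proof. by rewrite /msign; case: ifP; [left|right]. Qed.

Lemma normr_msign g : `|msign g| = 1.
Proof. by rewrite /msign; case: ifP; rewrite ?normrN normr1. Qed.

Let mul_eq_neq0 (x y c : k) : x * y = c -> c != 0 ->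
  (x == 0) = false /\ (y == 0) = false.
Proof. by move=> <-; rewrite mulf_eq0 negb_or => /andP[/negPf -> /negPf ->]. Qed.

Let oppr1_neq0 : -1 != 0 :> k. Proof. by rewrite oppr_eq0 oner_neq0. Qed.

Lemma row_sum_gt0 g : monomial_SL2 g -> 0 < row_sum g i0.
Proof.
case=> -[e1 [_ d]]; rewrite /row_sum e1 absval0 ?addr0 ?add0r absval_gt0 //.
  by have [-> _] := mul_eq_neq0 d (oner_neq0 _).
by have [-> _] := mul_eq_neq0 d oppr1_neq0.
Qed.

Lemma row_sum1E g : monomial_SL2 g -> row_sum g i1 = (row_sum g i0)^-1.
Proof.
move=> mg; have r0 := lt0r_neq0 (row_sum_gt0 mg).
apply: (mulfI r0); rewrite mulfV //.
case: mg => -[e1 [e2 d]]; rewrite /row_sum e1 e2 absval0 ?addr0 ?add0r -avM.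
  by rewrite d absval1.
by rewrite d absvalN1.
Qed.

Lemma msign1 : msign 1%:M = 1.
Proof. by rewrite /msign !mxE /= eqxx. Qed.

Lemma log_alpha1 : log_alpha 1%:M = 0.
Proof. by rewrite /log_alpha /row_sum !mxE /= absval1 absval0 addr0 ln1. Qed.

Lemma msignM a b : monomial_SL2 a -> monomial_SL2 b ->
  msign (a *m b) = msign a * msign b.
Proof.
rewrite /msign mulmx2E.
case=> -[ea1 [ea2 da]] [] [eb1 [eb2 db]];
  rewrite ?ea1 ?ea2 ?eb1 ?eb2 ?mul0r ?mulr0 ?addr0 ?add0r ?eqxx ?mulf_eq0.
- by rewrite mulr1.
- have [-> _] := mul_eq_neq0 da (oner_neq0 _).
  by have [-> _] := mul_eq_neq0 db oppr1_neq0; rewrite mul1r.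
- have [-> _] := mul_eq_neq0 da oppr1_neq0.
  by have [_ ->] := mul_eq_neq0 db (oner_neq0 _); rewrite mulr1.
- have [-> _] := mul_eq_neq0 da oppr1_neq0.
  by have [-> _] := mul_eq_neq0 db oppr1_neq0; rewrite mulrNN mulr1.
Qed.

Lemma log_alphaM a b : monomial_SL2 a -> monomial_SL2 b ->
  log_alpha (a *m b) = log_alpha a + msign a * log_alpha b.
Proof.
move=> ma mb; have [ra rb] := (row_sum_gt0 ma, row_sum_gt0 mb).
rewrite /log_alpha /msign; case: (ma) => -[e1 [e2 d]].
- have -> : row_sum (a *m b) i0 = row_sum a i0 * row_sum b i0.
    by rewrite /row_sum !mulmx2E e1 !mul0r !addr0 !avM absval0 addr0 mulrDr.
  by rewrite lnM ?posrE // e1 eqxx mul1r.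
- have -> : row_sum (a *m b) i0 = row_sum a i0 * (row_sum b i0)^-1.
    rewrite -row_sum1E // /row_sum !mulmx2E e1 !mul0r !add0r !avM.
    by rewrite absval0 add0r mulrDr.
  have [-> _] := mul_eq_neq0 d oppr1_neq0.
  by rewrite lnM ?posrE ?invr_gt0 // lnV ?posrE // mulN1r.
Qed.

Lemma maxnorm_gt0 (v : 'cV[k]_2) : v != 0 -> 0 < maxnorm A v.
Proof.
move=> v0; rewrite /maxnorm lt_max.
have [e0|] := eqVneq (v i0 ord0) 0; last by move/absval_gt0 ->.
have [e1|] := eqVneq (v i1 ord0) 0; last by move/absval_gt0 ->; rewrite orbT.
case/eqP: v0; apply/matrixP => i j; rewrite !mxE ord1.
by case: i => -[|[|//]] ? ; [rewrite -e0|rewrite -e1]; congr (v _ _); apply/val_inj.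
Qed.

Lemma maxnorm_mulmx_le g v :
  maxnorm A (g *m v) <= Num.max (row_sum g i0) (row_sum g i1) * maxnorm A v.
Proof.
have row_le i : A ((g *m v) i ord0) <= row_sum g i * maxnorm A v.
  rewrite mulmx2E; apply: le_trans (av_triangle _ _ _) _.
  rewrite !avM mulrDl lerD // ler_wpM2l ?av_ge0 // /maxnorm le_max lexx ?orbT //.
have mv0 : 0 <= maxnorm A v by rewrite le_max av_ge0.
rewrite {1}/maxnorm ge_max !(le_trans (row_le _)) // ler_wpM2r // le_max lexx ?orbT //.
Qed.

Lemma maxnorm_pt0 : maxnorm A (pt0 k) = 1.
Proof. by rewrite /maxnorm !mxE /= absval0 absval1 max_r ?ler01. Qed.

Lemma maxnorm_ptinf : maxnorm A (ptinf k) = 1.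
Proof. by rewrite /maxnorm !mxE /= absval0 absval1 max_l ?ler01. Qed.

Lemma opnorm_monomial g : monomial_SL2 g ->
  opnorm A g = Num.max (row_sum g i0) (row_sum g i1).
Proof.
move=> mg; rewrite /opnorm; set E := [set _ | _ in _].
have ubE : ubound E (Num.max (row_sum g i0) (row_sum g i1)).
  move=> _ [v /= v0 <-]; rewrite ler_pdivrMr ?maxnorm_gt0 //.
  exact: maxnorm_mulmx_le.
have pt0_neq0 : pt0 k != 0.
  by apply/eqP => /matrixP /(_ i1 ord0); rewrite !mxE /= => /eqP; rewrite oner_eq0.
have ptinf_neq0 : ptinf k != 0.
  by apply/eqP => /matrixP /(_ i0 ord0); rewrite !mxE /= => /eqP; rewrite oner_eq0.
have E0 : E (Num.max (A (g i0 i1)) (A (g i1 i1))).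
  by exists (pt0 k) => //; rewrite maxnorm_pt0 divr1 /maxnorm !mul_pt0.
have Einf : E (Num.max (A (g i0 i0)) (A (g i1 i0))).
  by exists (ptinf k) => //; rewrite maxnorm_ptinf divr1 /maxnorm !mul_ptinf.
apply/eqP; rewrite eq_le ge_sup //=; last first.
  by exists (Num.max (A (g i0 i0)) (A (g i1 i0))).
have [s0 sinf] : Num.max (A (g i0 i1)) (A (g i1 i1)) <= sup E /\
                 Num.max (A (g i0 i0)) (A (g i1 i0)) <= sup E.
  by split; apply: ub_le_sup => //; exists (Num.max (row_sum g i0) (row_sum g i1)).
rewrite /row_sum; case: mg => -[e1 [e2 _]]; rewrite e1 e2 absval0 ?addr0 ?add0r ge_max.
  by rewrite (le_trans _ sinf) ?(le_trans _ s0) // le_max lexx ?orbT.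
by rewrite (le_trans _ s0) ?(le_trans _ sinf) // le_max lexx ?orbT.
Qed.

Lemma ln_max_inv (r : R) : 0 < r -> ln (Num.max r r^-1) = `|ln r|.
Proof.
move=> r0; have [r1|r1] := lerP 1 r.
  by rewrite max_l ?ger0_norm ?ln_ge0 // (le_trans _ r1) // invf_le1.
rewrite max_r ?lnV ?posrE ?ltr0_norm //; last first.
  by rewrite (le_trans (ltW r1)) // invf_ge1 // ltW.
by rewrite -ln1 ltr_ln ?posrE.
Qed.

Lemma ln_opnorm_monomial g : monomial_SL2 g -> ln (opnorm A g) = `|log_alpha g|.
Proof.
by move=> mg; rewrite opnorm_monomial // row_sum1E // ln_max_inv ?row_sum_gt0.
Qed.

End monomial_norm.

Section convolution.
Variables (k : fieldType) (R : realType).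
Local Notation M := 'M[k]_2.
Implicit Types (P q : M -> R).

Definition monomial_prob (p : M -> R) : Prop :=
  [/\ forall g, 0 <= p g, (\esum_(g in setT) (p g)%:E = 1)%E &
      forall g, p g != 0 -> monomial_SL2 g].

Lemma conv_ge0 P q g : (forall g, 0 <= P g) -> (forall g, 0 <= q g) ->
  0 <= Defs.conv P q g.
Proof. by move=> P0 q0; apply/fine_ge0/esum_ge0 => x _; rewrite lee_fin mulr_ge0. Qed.

Lemma conv_neq0 P q g : Defs.conv P q g != 0 ->
  exists a b, [/\ a *m b = g, P a != 0 & q b != 0].
Proof.
apply: contraNP => H; apply/eqP; rewrite /Defs.conv esum1 // => -[a b] /= e.
have [->|Pa] := eqVneq (P a) 0; first by rewrite mul0r.
have [->|qb] := eqVneq (q b) 0; first by rewrite mulr0.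
by case: H; exists a, b.
Qed.

Lemma wsum_conv P q h : (forall g, 0 <= P g) -> (forall g, 0 <= q g) ->
  (\esum_(g in setT) (P g)%:E = 1)%E -> (\esum_(g in setT) (q g)%:E = 1)%E ->
  (forall g, 0 <= h g) ->
  wsum (Defs.conv P q) h =
    (\esum_(a in setT) (P a)%:E * wsum q (fun b => h (a *m b)))%E.
Proof.
move=> P0 q0 P1 q1 h0.
have Pq0 (x : M * M) : (0 <= (P x.1 * q x.2)%:E)%E by rewrite lee_fin mulr_ge0.
have Pqh0 (x : M * M) : (0 <= (P x.1 * q x.2 * h (x.1 *m x.2))%:E)%E.
  by rewrite lee_fin !mulr_ge0.
have fib_fin g : \esum_(x in [set x : M * M | x.1 *m x.2 = g]) (P x.1 * q x.2)%:E
                 \is a fin_num.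
  rewrite ge0_fin_numE ?esum_ge0 //.
  apply: (@le_lt_trans _ _ (\esum_(x in setT) (P x.1 * q x.2)%:E)).
    by rewrite [leRHS](esumID [set x | x.1 *m x.2 = g]) // setTI leeDl // esum_ge0.
  rewrite esum_pair //=; under eq_esum do under eq_esum do rewrite EFinM.
  have qE0 b : (0 <= (q b)%:E)%E by rewrite lee_fin.
  under eq_esum => a _ do rewrite (esumZl _ (P0 a) qE0) q1 mule1.
  by rewrite P1 ltry.
transitivity (\esum_(g in setT) \esum_(x in [set x : M * M | x.1 *m x.2 = g])
                (P x.1 * q x.2 * h (x.1 *m x.2))%:E)%E.
  apply: eq_esum => g _; rewrite /Defs.conv EFinM fineK // -esumZr //.
  by apply: eq_esum => x /= ->; rewrite EFinM.
rewrite (esum_fibres (fun x : M * M => x.1 *m x.2)) // esum_pair //.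
apply: eq_esum => a _; rewrite /wsum -esumZl // => [|b].
  by apply: eq_esum => b _; rewrite -EFinM mulrA.
by rewrite lee_fin mulr_ge0.
Qed.

Lemma monomial_prob_conv P q : monomial_prob P -> monomial_prob q ->
  monomial_prob (Defs.conv P q).
Proof.
case=> P0 P1 Pm [q0 q1 qm]; split.
- by move=> g; exact: conv_ge0.
- have := wsum_conv P0 q0 P1 q1 (fun=> ler01); rewrite /wsum.
  under eq_esum do rewrite mulr1.
  move=> ->; under eq_esum do under eq_esum do rewrite mulr1.
  by under eq_esum do rewrite q1 mule1.
- by move=> g /conv_neq0 [a [b [<- /Pm ma /qm mb]]]; exact: monomial_SL2_mul.
Qed.

Lemma monomial_prob_convpow p n : monomial_prob p -> monomial_prob (convpow p n).
Proof.
move=> mp; elim: n => [|n IH]; last exact: monomial_prob_conv.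
split=> [g /=|/=|g /=]; first by case: ifP.
  by rewrite (esumT_point (t := 1%:M)) /= ?eqxx // => x /negPf ->.
by case: ifP => [/eqP -> _|]; [exact: monomial_SL2_1|rewrite eqxx].
Qed.

End convolution.

Section huber.
Variables (R : realFieldType) (K : R).
Hypothesis K_gt0 : 0 < K.
Implicit Types a h t : R.

Definition huber t :=
  if t < - K then - K * t - K ^+ 2 / 2 else if t <= K then t ^+ 2 / 2
  else K * t - K ^+ 2 / 2.
Definition huber' t := if t < - K then - K else if t <= K then t else K.
Definition huber_rem t := Num.min (t ^+ 2 / 2) (2 * K * `|t|).

Lemma huber_ge0 t : 0 <= huber t.
Proof.
have := K_gt0; rewrite /huber.
by case: (ltrP t (- K)) => ?; try case: (lerP t K) => ?; nra.
Qed.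

Lemma huber_ge_norm t : K * `|t| - K ^+ 2 / 2 <= huber t.
Proof.
have := K_gt0; rewrite /huber.
case: (lerP 0 t) => ?; [rewrite ger0_norm //|rewrite ltr0_norm //];
  by case: (ltrP t (- K)) => ?; try case: (lerP t K) => ?; nra.
Qed.

Lemma normr_le_huber t : `|t| <= K^-1 * huber t + K / 2.
Proof.
rewrite -(ler_pM2l K_gt0) mulrDr mulrA mulfV ?gt_eqF // mul1r.
have : K * (K / 2) = K ^+ 2 / 2 by rewrite expr2 mulrA.
by have := huber_ge_norm t; lra.
Qed.

Lemma huber_rem_ge0 t : 0 <= huber_rem t.
Proof.
have := K_gt0; have := normr_ge0 t; have := sqr_ge0 t.
by rewrite /huber_rem le_min => *; apply/andP; split; nra.
Qed.

Lemma huber_rem_le t : huber_rem t <= 2 * K * `|t|.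
Proof. by rewrite /huber_rem ge_min lexx orbT. Qed.

Lemma huber_rem_sqr t : huber_rem t <= t ^+ 2 / 2.
Proof. by rewrite /huber_rem ge_min lexx. Qed.

Lemma huber_remM s t : `|s| = 1 -> huber_rem (s * t) = huber_rem t.
Proof.
move=> s1; rewrite /huber_rem normrM s1 mul1r exprMn.
have -> : s ^+ 2 = 1 by rewrite -real_normK ?s1 ?expr1n // num_real.
by rewrite mul1r.
Qed.

Lemma huber_le_quadratic a h : huber (a + h) <= huber a + huber' a * h + h ^+ 2 / 2.
Proof.
have := K_gt0; rewrite /huber /huber'.
case: (ltrP a (- K)) => ?; [|case: (lerP a K) => ?];
case: (ltrP (a + h) (- K)) => ?; try case: (lerP (a + h) K) => ?; nra.
Qed.

Lemma huber_lipschitz a h : huber (a + h) <= huber a + K * `|h|.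
Proof.
have := K_gt0; rewrite /huber.
case: (lerP 0 h) => ?; [rewrite ger0_norm //|rewrite ltr0_norm //];
case: (ltrP a (- K)) => ?; [|case: (lerP a K) => ?| |case: (lerP a K) => ?];
case: (ltrP (a + h) (- K)) => ?; try case: (lerP (a + h) K) => ?; nra.
Qed.

Lemma normr_huber' a : `|huber' a| <= K.
Proof.
have := K_gt0; rewrite /huber' => K0.
case: (ltrP a (- K)) => ?; [|case: (lerP a K) => ?].
- by rewrite normrN gtr0_norm.
- by rewrite ler_norml; apply/andP.
- by rewrite gtr0_norm.
Qed.

Lemma huber_expand a h : huber (a + h) <= huber a + huber' a * h + huber_rem h.
Proof.
rewrite /huber_rem -lerBlDl le_min !lerBlDl huber_le_quadratic /=.
have : - (huber' a * h) <= K * `|h|.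
  rewrite (le_trans (ler_norm _)) // normrN normrM ler_wpM2r //.
  exact: normr_huber'.
by have := huber_lipschitz a h; lra.
Qed.

End huber.

Lemma cvg_ereal_sublinear (R : realType) (u : nat -> \bar R) :
  (forall n, (0 <= u n)%E) ->
  (forall e, 0 < e -> exists B : R, forall n, (u n <= (B + e * n%:R)%:E)%E) ->
  (fun n => ((n%:R)^-1)%:E * u n)%E @ \oo --> (0 : \bar R)%E.
Proof.
move=> u0 ub.
have ufin n : u n \is a fin_num.
  have [B uB] := ub 1 ltr01.
  by rewrite ge0_fin_numE // (le_lt_trans (uB n)) ?ltry.
apply: (@cvg_EFin _ _ _ _ _ 0); first by apply: filterE => n; rewrite fin_numM.
apply/cvgrPdist_le => e e0; have e2 : 0 < e / 2 by rewrite divr_gt0.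
have [B uB] := ub _ e2.
have B0 : 0 <= B.
  by have := le_trans (u0 0%N) (uB 0%N); rewrite lee_fin mulr0 addr0.
near=> n.
have n0 : 0 < n%:R :> R by rewrite ltr0n; near: n; exists 1%N.
have nB : B <= n%:R * (e / 2).
  rewrite -ler_pdivrMr // ltW // (lt_le_trans (truncnS_gt _)) // ler_nat.
  by near: n; exists (Num.truncn (B / (e / 2))).+1.
have := uB n; rewrite -(fineK (ufin n)) lee_fin => un.
rewrite /= fineM // sub0r normrN ger0_norm ?mulr_ge0 ?fine_ge0 //.
by rewrite mulrC ler_pdivrMr //; lra.
Unshelve. all: by end_near.
Qed.

Lemma int_lognorm_monomial (R : realType) (k : fieldType) (A : absval k R)
    (q : 'M[k]_2 -> R) : (forall g, q g != 0 -> monomial_SL2 g) ->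
  int_lognorm A q = wsum q (fun g => `|log_alpha A g|).
Proof.
move=> qm; apply: eq_esum => g _.
by have [->|/qm mg] := eqVneq (q g) 0; rewrite ?mul0r // ln_opnorm_monomial.
Qed.

Section random_walk.
Variables (R : realType) (k : fieldType) (A : absval k R) (p : 'M[k]_2 -> R).
Hypotheses (mp : monomial_prob p) (log_int : wintegrable p (log_alpha A)).
Variable g0 : 'M[k]_2.
Hypotheses (pg0 : p g0 != 0) (g0_swap : g0 i0 i1 != 0).
Local Notation M := 'M[k]_2.
Local Notation msign := (msign R).

Let p_ge0 : forall g, 0 <= p g. Proof. by case: mp. Qed.
Let p_mass1 : (\esum_(g in setT) (p g)%:E = 1)%E. Proof. by case: mp. Qed.
Let p_monomial : forall g, p g != 0 -> monomial_SL2 g. Proof. by case: mp. Qed.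

Definition swap_mass := wmean p (fun g => 1 - msign g).
Definition drift := wmean p (log_alpha A) / swap_mass.
Definition centered_log g := log_alpha A g - drift * (1 - msign g).
Definition corrected_log g := log_alpha A g + drift * msign g.

Lemma wintegrable_1_msign : wintegrable p (fun g => 1 - msign g).
Proof.
apply: (wintegrable_le p_ge0 (g := fun=> 2)); last exact: wintegrable_cst.
by move=> g _; case: (msign_cases R g) => ->; rewrite ?subrr ?normr0 ?opprK ger0_norm.
Qed.

Lemma swap_mass_gt0 : 0 < swap_mass.
Proof.
have ge0 (g : M) : 0 <= 1 - msign g by case: (msign_cases R g) => ->; lra.
apply: lt_le_trans (wmean_ge_point p_ge0 p_mass1 g0 ge0 wintegrable_1_msign).
rewrite /msign (negPf g0_swap) mulr_gt0 ?lt_def ?pg0 ?p_ge0 //; lra.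
Qed.

Lemma wintegrable_centered_log : wintegrable p centered_log.
Proof.
apply: wintegrableD => //; apply: wintegrableN => //.
exact/wintegrableZ/wintegrable_1_msign.
Qed.

Lemma wmean_centered_log : wmean p centered_log = 0.
Proof.
have i1s := wintegrable_1_msign.
rewrite /centered_log wmeanD ?wmeanN ?wmeanZ ?wintegrableN ?wintegrableZ //.
by rewrite -/swap_mass /drift divfK ?subrr // gt_eqF // swap_mass_gt0.
Qed.

Lemma corrected_log1 : corrected_log 1%:M = drift.
Proof. by rewrite /corrected_log log_alpha1 msign1 add0r mulr1. Qed.

Lemma corrected_logM a b : monomial_SL2 a -> monomial_SL2 b ->
  corrected_log (a *m b) = corrected_log a + msign a * centered_log b.
Proof.
by move=> ma mb; rewrite /corrected_log /centered_log log_alphaM // msignM //; ring.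
Qed.

Lemma normr_log_alpha_le g : `|log_alpha A g| <= `|corrected_log g| + `|drift|.
Proof.
have -> : log_alpha A g = corrected_log g - drift * msign g.
  by rewrite /corrected_log; ring.
by rewrite (le_trans (ler_normB _ _)) // normrM normr_msign mulr1.
Qed.

Definition centered_rem K := wmean p (fun b => huber_rem K (centered_log b)).

Lemma wintegrable_centered_rem K : 0 < K ->
  wintegrable p (fun b => huber_rem K (centered_log b)).
Proof.
move=> K0; apply: (wintegrable_le p_ge0 (g := fun b => 2 * K * centered_log b)).
  move=> b _; rewrite ger0_norm ?huber_rem_ge0 // normrM (ger0_norm (x := 2 * K)).
    exact: huber_rem_le.
  by rewrite mulr_ge0 // ltW.
exact/wintegrableZ/wintegrable_centered_log.
Qed.

Lemma centered_rem_ge0 K : 0 < K -> 0 <= centered_rem K.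
Proof. by move=> K0; apply: wmean_ge0 => // b _; exact: huber_rem_ge0. Qed.

Lemma huber_step K a : 0 < K -> monomial_SL2 a ->
  wintegrable p (fun b => huber K (corrected_log (a *m b))) /\
  wmean p (fun b => huber K (corrected_log (a *m b))) <=
    huber K (corrected_log a) + centered_rem K.
Proof.
move=> K0 ma; have ic := wintegrable_centered_log.
pose c := huber' K (corrected_log a) * msign a.
pose G b := huber K (corrected_log a) + c * centered_log b
            + huber_rem K (centered_log b).
have iaff : wintegrable p (fun b => huber K (corrected_log a) + c * centered_log b).
  apply: (wintegrableD p_ge0); first exact: wintegrable_cst.
  exact: wintegrableZ.
have iG : wintegrable p G := wintegrableD p_ge0 iaff (wintegrable_centered_rem K0).
have FG b : p b != 0 -> huber K (corrected_log (a *m b)) <= G b.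
  move/p_monomial=> mb; rewrite corrected_logM // /G /c.
  by rewrite (le_trans (huber_expand K0 _ _)) // huber_remM ?normr_msign // mulrA.
have iF : wintegrable p (fun b => huber K (corrected_log (a *m b))).
  apply: (wintegrable_le p_ge0 _ iG) => b pb.
  by rewrite !ger0_norm ?FG ?(le_trans _ (FG b pb)) ?huber_ge0.
split=> //; apply: le_trans (ler_wmean p_ge0 iF iG FG) _.
rewrite /G (wmeanD p_ge0 iaff (wintegrable_centered_rem K0)).
rewrite (wmeanD p_ge0 (wintegrable_cst p_ge0 p_mass1 _) (wintegrableZ p_ge0 _ ic)).
by rewrite wmean_cst // wmeanZ // wmean_centered_log mulr0 addr0.
Qed.

Lemma wsum_huber_convpow K n : 0 < K ->
  (wsum (convpow p n) (fun g => huber K (corrected_log g)) <=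
   (huber K drift + n%:R * centered_rem K)%:E)%E.
Proof.
move=> K0; set h := fun g => huber K (corrected_log g).
have h0 g : 0 <= h g := huber_ge0 K0 _.
have d0 := centered_rem_ge0 K0.
elim: n => [|n IH].
  rewrite /wsum (esumT_point (t := 1%:M)) /= ?eqxx.
  - by rewrite mul1r /h corrected_log1 mul0r addr0.
  - by move=> g /negPf ->; rewrite mul0r.
  - by rewrite mul1r lee_fin h0.
have [P0 P1 Pm] := monomial_prob_convpow n mp.
rewrite /= (wsum_conv P0 p_ge0 P1 p_mass1 h0).
apply: (@le_trans _ _ (wsum (convpow p n) (fun a => h a + centered_rem K))).
  apply: le_esum => a _; rewrite EFinM.
  have [->|/Pm ma] := eqVneq (convpow p n a) 0; first by rewrite !mul0e.
  have [iF leF] := huber_step K0 ma.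
  rewrite -(wmean_nng p_ge0 p_mass1 _ iF) => [|b]; last exact: h0.
  by rewrite lee_wpmul2l ?lee_fin.
rewrite (wsumD P0 h0 (fun=> d0)) (wsum_cst P0 P1 d0).
apply: le_trans (leeD IH (lexx _)) _.
by rewrite -EFinD lee_fin -addrA lerD // mulrSr mulrDl mul1r.
Qed.

Lemma int_lognorm_convpow_le K n : 0 < K ->
  (int_lognorm A (convpow p n) <=
   ((huber K drift + n%:R * centered_rem K) / K + (K / 2 + `|drift|))%:E)%E.
Proof.
move=> K0; have [P0 P1 Pm] := monomial_prob_convpow n mp.
have Ki0 : 0 <= K^-1 by rewrite invr_ge0 ltW.
have hK g : 0 <= K^-1 * huber K (corrected_log g) by rewrite mulr_ge0 ?huber_ge0.
have c0 : 0 <= K / 2 + `|drift| by rewrite addr_ge0 // divr_ge0 // ltW.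
rewrite int_lognorm_monomial //.
apply: (@le_trans _ _ (wsum (convpow p n)
   (fun g => K^-1 * huber K (corrected_log g) + (K / 2 + `|drift|)))).
  apply: le_wsum => // g _; apply: le_trans (normr_log_alpha_le g) _.
  by have := normr_le_huber K0 (corrected_log g); lra.
rewrite (wsumD P0 hK (fun=> c0)) (wsum_cst P0 P1 c0).
rewrite (wsumZ P0 Ki0 (fun g => huber_ge0 K0 _)).
rewrite [in leRHS]EFinD; apply: leeD2r.
by rewrite [_ / K]mulrC EFinM lee_wpmul2l ?lee_fin // wsum_huber_convpow.
Qed.

(* Dominated convergence by hand: [huber_rem] is at most x^2/2 on a finite set
   carrying all of E|x| but e/4, and at most 2K|x| off it. *)
Lemma centered_rem_small e : 0 < e -> exists2 K, 0 < K & centered_rem K <= e * K.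
Proof.
move=> e0; have e4 : 0 < e / 4 by rewrite divr_gt0.
have inxi := wintegrable_normr p_ge0 wintegrable_centered_log.
have [X finX tailX] := wintegrable_tail p_ge0 p_mass1
  (fun b => normr_ge0 (centered_log b)) inxi e4.
pose F1 b := centered_log b ^+ 2 / 2 * \1_X b.
pose F2 b := `|centered_log b| * (1 - \1_X b).
have F10 b : 0 <= F1 b by rewrite mulr_ge0 ?divr_ge0 ?sqr_ge0 ?indic_ge0.
have F20 b : 0 <= F2 b.
  by rewrite /F2 indicE; case: (b \in X); rewrite ?subrr ?mulr0 ?subr0 ?mulr1.
have iF1 : wintegrable p F1 := wintegrable_indic p_ge0 _ finX.
have iF2 : wintegrable p F2.
  apply: (wintegrable_le p_ge0 _ inxi) => b _; rewrite normr_id ger0_norm //.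
  by rewrite /F2 indicE; case: (b \in X); rewrite ?subrr ?mulr0 ?subr0 ?mulr1.
set C := wmean p F1.
have C0 : 0 <= C by apply: wmean_ge0.
pose K := 1 + 2 * C / e.
have K0 : 0 < K.
  have : 0 <= 2 * C / e by apply: divr_ge0; [apply: mulr_ge0|apply: ltW].
  rewrite /K; lra.
exists K => //.
have remF b : huber_rem K (centered_log b) <= F1 b + 2 * K * F2 b.
  have := huber_rem_sqr K (centered_log b); have := huber_rem_le K (centered_log b).
  rewrite /F1 /F2 indicE; case: (b \in X).
    by rewrite subrr !mulr0 addr0 mulr1.
  by rewrite subr0 !mulr1 mulr0 add0r.
have := ler_wmean p_ge0 (wintegrable_centered_rem K0)
  (wintegrableD p_ge0 iF1 (wintegrableZ p_ge0 (2 * K) iF2)) (fun b _ => remF b).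
rewrite (wmeanD p_ge0 iF1 (wintegrableZ p_ge0 _ iF2)) (wmeanZ p_ge0 _ iF2) -/C.
have eK : e * K = e + 2 * C by rewrite /K mulrDr mulr1 mulrCA mulfV ?gt_eqF // mulr1.
have : 2 * K * wmean p F2 <= 2 * K * (e / 4).
  by apply: ler_wpM2l tailX; rewrite mulr_ge0 // ltW.
rewrite /centered_rem; lra.
Qed.

Lemma int_lognorm_convpow_ge0 n : (0 <= int_lognorm A (convpow p n))%E.
Proof.
have [P0 _ Pm] := monomial_prob_convpow n mp.
by rewrite int_lognorm_monomial // wsum_ge0.
Qed.

Lemma int_lognorm_convpow_sublinear e : 0 < e ->
  exists B : R, forall n, (int_lognorm A (convpow p n) <= (B + e * n%:R)%:E)%E.
Proof.
move=> e0; have [K K0 remK] := centered_rem_small e0.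
exists (huber K drift / K + (K / 2 + `|drift|)) => n.
apply: le_trans (int_lognorm_convpow_le n K0) _; rewrite lee_fin mulrDl.
have : n%:R * centered_rem K / K <= e * n%:R.
  by rewrite ler_pdivrMr // [e * _]mulrC -mulrA ler_wpM2l.
lra.
Qed.

End random_walk.

Theorem proposition5p3 (R : realType) (k : fieldType) (A : absval k R)
  (Acompl : av_complete A) (p : 'M[k]_2 -> R)
  (hp : discrete_prob p)
  (hSL : forall g, p g != 0 -> \det g = 1)
  (hint : (int_lognorm A p < +oo)%E)
  (hinv : forall g, p g != 0 -> leaves_0inf g)
  (hswap : exists g, p g != 0 /\ swaps_0inf g) :
  (fun n : nat => ((n%:R)^-1)%:E * int_lognorm A (convpow p n))%E
    @ \oo --> (0 : \bar R)%E.
Proof.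
case: hp => p_ge0 _ p_mass1.
have mp : monomial_prob p.
  by split=> // g pg; apply: monomial_SL2_leaves_0inf (hSL g pg) (hinv g pg).
have log_int : wintegrable p (log_alpha A).
  by rewrite /wintegrable -int_lognorm_monomial //; case: mp.
have [g0 [pg0 /swaps_0inf_entry g0_swap]] := hswap.
apply: cvg_ereal_sublinear => [n|e e0]; first exact: int_lognorm_convpow_ge0.
exact: (int_lognorm_convpow_sublinear mp log_int pg0 g0_swap).
Qed.
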